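(* Let $h=(X,E,\mathit{in}_0)$ be a flow graph over a flow monoid $\mathbb{M}$ all of whose edge functions are continuous and distributive. Then for every inflow $\mathit{in}:(\mathbb{N}\setminus X)\times X\to\mathbb{M}$, every $y\in X$ and every $z\in\mathbb{N}\setminus X$, $$\mathsf{tf}(h)(\mathit{in})(y,z)=\sum_{x\in X}\ \sum_{p\in\mathrm{Paths}_h(x\to(y,z))}E_p(\mathit{in}_x).$$
   Context: A flow monoid is a commutative monoid $(\mathbb{M},+,0)$ such that $n\le m :\iff \exists o.\ m=n+o$ is a partial order in which every ascending chain $K$ has a least upper bound $\bigsqcup K$, and $n+\bigsqcup K=\bigsqcup(n+K)$. $\mathcal{C}(\mathbb{M}\to\mathbb{M})$ is the set of functions commuting with least upper bounds of ascending chains (continuous). A function $f$ is distributive if $f(m+n)=f(m)+f(n)$ for all $m,n$ and $f(0)=0$. Infinite sums denote least upper bounds of the ascending chain of finite partial sums; empty sums are $0$. A flow graph is $h=(X,E,\mathit{in})$ with $X\subseteq\mathbb{N}$ finite, $E:X\times\mathbb{N}\to\mathcal{C}(\mathbb{M}\to\mathbb{M})$, $\mathit{in}:(\mathbb{N}\setminus X)\times X\to\mathbb{M}$; $\mathit{in}_x=\sum_{y\in\mathbb{N}\setminus X}\mathit{in}(y,x)$; the flow is the least $\mathit{flow}:X\to\mathbb{M}$ with $\mathit{flow}(x)=\mathit{in}_x+\sum_{y\in X}E(y,x)(\mathit{flow}(y))$; the outflow is $\mathit{out}(x,y)=E(x,y)(\mathit{flow}(x))$ for $x\in X$, $y\notin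 X$. The transfer function $\mathsf{tf}(h)(\mathit{in}')$ is the outflow of $(X,E,\mathit{in}')$. A path through $h$ is a sequence $p=x_0x_1\cdots x_nz$ with $n\ge0$, $x_i\in X$, $z\in\mathbb{N}\setminus X$; $\mathrm{first}(p)=x_0$, $\mathrm{last}(p)=x_n$. $\mathrm{Paths}_h(x\to(y,z))$ is the set of paths with $x_0=x$, $x_n=y$ and final element $z$. Its edge function is $E_p=E(x_n,z)\circ E(x_{n-1},x_n)\circ\cdots\circ E(x_0,x_1)$. *)

From HB Require Import structures.
From mathcomp Require Import all_boot all_algebra finmap.
From Stdlib Require Import ClassicalEpsilon.
Set Implicit Arguments. Unset Strict Implicit. Unset Printing Implicit Defensive.
Import GRing.Theory.
Local Open Scope ring_scope.

Section FlowMonoid.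
Variable M : nmodType.

Definition leM (n m : M) : Prop := exists o, m = n + o.

Definition ascending (K : nat -> M) : Prop := forall i, leM (K i) (K i.+1).

Definition is_lub (S : M -> Prop) (s : M) : Prop :=
  (forall m, S m -> leM m s) /\ (forall u, (forall m, S m -> leM m u) -> leM s u).

Definition range (K : nat -> M) : M -> Prop := fun m => exists i, m = K i.

(* flow monoid: leM is a partial order (reflexivity and transitivity are
   automatic; antisymmetry is required), every ascending chain has a lub,
   and n + lub K = lub (n + K). *)
Definition flow_monoid : Prop :=
  [/\ (forall n m, leM n m -> leM m n -> n = m),
      (forall K, ascending K -> exists s, is_lub (range K) s) &
      (forall n K s, ascending K -> is_lub (range K) s ->
                     is_lub (range (fun i => n + K i)) (n + s))].

Definition lub (K : nat -> M) : M :=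
  epsilon (inhabits 0) (is_lub (range K)).

Definition continuousM (f : M -> M) : Prop :=
  forall K s, ascending K -> is_lub (range K) s ->
              is_lub (range (fun i => f (K i))) (f s).

Definition distributive (f : M -> M) : Prop :=
  (forall m n, f (m + n) = f m + f n) /\ f 0 = 0.

Definition isum (T : countType) (P : pred T) (f : T -> M) : M :=
  lub (fun n => \sum_(i < n)
         match @pickle_inv T i with
         | Some t => if P t then f t else 0
         | None => 0
         end).

(* Flow graph h = (X, E, in) with X a finite subset of nat,
   E : nat -> nat -> (M -> M) (only E x y with x \in X matters),
   in : nat -> nat -> M (only in y x with y \notin X, x \in X matters). *)

Definition inflow (X : {fset nat}) (inf : nat -> nat -> M) (x : nat) : M :=
  isum (fun y : nat => y \notin X) (fun y => inf y x).

Definition flow_eq (X : {fset nat}) (E : nat -> nat -> M -> M)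
    (inf : nat -> nat -> M) (f : nat -> M) : Prop :=
  forall x, x \in X -> f x = inflow X inf x + \sum_(y <- X) E y x (f y).

Definition is_least_flow (X : {fset nat}) (E : nat -> nat -> M -> M)
    (inf : nat -> nat -> M) (f : nat -> M) : Prop :=
  flow_eq X E inf f /\
  forall g, flow_eq X E inf g -> forall x, x \in X -> leM (f x) (g x).

(* the flow (values outside X are irrelevant) *)
Definition flow (X : {fset nat}) (E : nat -> nat -> M -> M)
    (inf : nat -> nat -> M) : nat -> M :=
  epsilon (inhabits (fun _ => 0)) (is_least_flow X E inf).

Definition tf (X : {fset nat}) (E : nat -> nat -> M -> M)
    (inf : nat -> nat -> M) (x y : nat) : M :=
  E x y (flow X E inf x).

End FlowMonoid.

(* A path x0 x1 ... xn z (n >= 0) is a sequence of length >= 2 whose elements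
   except the last lie in X and whose last element z lies outside X.
   is_path_to X x y z p : p is in Paths_h(x -> (y, z)). *)
Definition is_path_to (X : {fset nat}) (x y z : nat) (p : seq nat) : bool :=
  [&& (1 < size p)%N, all (fun v => v \in X) (take (size p).-1 p),
      head 0 p == x, nth 0 p (size p).-2 == y, last 0 p == z & z \notin X].

Fixpoint pathfun (M : Type) (E : nat -> nat -> M -> M) (p : seq nat) : M -> M :=
  match p with
  | a :: ((b :: _) as t) => fun m => pathfun E t (E a b m)
  | _ => fun m => m
  end.

From HB Require Import structures.
From mathcomp Require Import all_boot all_algebra finmap.
From Stdlib Require Import ClassicalEpsilon.
Set Implicit Arguments. Unset Strict Implicit. Unset Printing Implicit Defensive.
Import GRing.Theory.
Local Open Scope ring_scope.

(* The flow is the least fixpoint of the monotone, chain-continuous map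
   g |-> (x |-> in_x + sum_w E(w,x)(g w)); by Kleene's theorem it is the lub
   of the iterates g_k starting from 0.  Unfolding the iteration with
   distributivity, g_k(y) is the sum, over all x in X and all X-walks
   x ... y with fewer than k edges, of the walk's edge function applied to
   in_x.  Applying the continuous E(y,z) and exchanging lubs with finite sums,
   tf(y,z) is the lub over k of the sums over paths x ... y z of size <= k+1.
   Finally these finite path sets exhaust Paths(x -> (y,z)), so their sums are
   cofinal with the partial sums defining the infinite sum. *)

Section MonoidOrder.
Variable M : nmodType.
Implicit Types a b c d m o : M.

Lemma leM_refl m : leM m m.
Proof. by exists 0; rewrite addr0. Qed.

Lemma leM_trans a b c : leM a b -> leM b c -> leM a c.
Proof. by move=> [o ->] [o' ->]; exists (o + o'); rewrite addrA. Qed.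

Lemma leM0 m : leM 0 m.
Proof. by exists m; rewrite add0r. Qed.

Lemma leM_addr m o : leM m (m + o).
Proof. by exists o. Qed.

Lemma leM_add a b c d : leM a b -> leM c d -> leM (a + c) (b + d).
Proof.
move=> [o ->] [o' ->]; exists (o + o').
by rewrite -!addrA; congr (_ + _); rewrite addrCA.
Qed.

Lemma leM_sum (I : eqType) (s : seq I) (F G : I -> M) :
  (forall i, i \in s -> leM (F i) (G i)) ->
  leM (\sum_(i <- s) F i) (\sum_(i <- s) G i).
Proof.
move=> FG; rewrite big_seq [X in leM _ X]big_seq.
by elim/big_ind2: _ => [|? ? ? ?|]; [exact: leM_refl | exact: leM_add | exact: FG].
Qed.

Lemma leM_sub_sum (I : eqType) (s r : seq I) (F : I -> M) :
  uniq s -> uniq r -> {subset s <= r} ->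
  leM (\sum_(i <- s) F i) (\sum_(i <- r) F i).
Proof.
move=> us ur sr; rewrite [X in leM _ X](bigID (mem s)) /=.
have -> : \sum_(i <- r | i \in s) F i = \sum_(i <- s) F i.
  rewrite -big_filter; apply: perm_big; apply: uniq_perm => //.
    exact: filter_uniq.
  by move=> i; rewrite mem_filter andb_idr //; apply: sr.
exact: leM_addr.
Qed.

Lemma ascending_le (K : nat -> M) : ascending K ->
  forall i j, (i <= j)%N -> leM (K i) (K j).
Proof.
move=> HK i j /subnK <-; elim: (j - i)%N => [|n IH]; first exact: leM_refl.
by rewrite addSn; apply: leM_trans IH (HK _).
Qed.

Lemma distributive_sum (f : M -> M) : distributive f ->
  forall (I : Type) (s : seq I) (P : pred I) (F : I -> M),
  f (\sum_(i <- s | P i) F i) = \sum_(i <- s | P i) f (F i).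
Proof. by move=> [fD f0] I s P F; apply: big_morph. Qed.

Lemma distributive_mono (f : M -> M) : distributive f ->
  forall a b, leM a b -> leM (f a) (f b).
Proof. by move=> [fD _] a b [o ->]; rewrite fD; apply: leM_addr. Qed.

End MonoidOrder.

Section Lubs.
Variable M : nmodType.
Hypothesis HM : flow_monoid M.
Implicit Types K L : nat -> M.

Lemma is_lub_ub K s i : is_lub (range K) s -> leM (K i) s.
Proof. by case=> ub _; apply: ub; exists i. Qed.

Lemma is_lub_least K s u :
  is_lub (range K) s -> (forall i, leM (K i) u) -> leM s u.
Proof. by case=> _ least Ku; apply: least => m [i ->]. Qed.

Lemma is_lubI K s :
  (forall i, leM (K i) s) -> (forall u, (forall i, leM (K i) u) -> leM s u) ->
  is_lub (range K) s.
Proof.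
move=> ub least; split; first by move=> m [i ->].
by move=> u Hu; apply: least => i; apply: Hu; exists i.
Qed.

Lemma is_lub_ext K L s :
  (forall i, K i = L i) -> is_lub (range K) s -> is_lub (range L) s.
Proof.
move=> KL Ks; apply: is_lubI => [i|u Lu]; first by rewrite -KL; apply: is_lub_ub Ks.
by apply: (is_lub_least Ks) => i; rewrite KL.
Qed.

Lemma lub_unshift K s : ascending K ->
  is_lub (range (fun i => K i.+1)) s -> is_lub (range K) s.
Proof.
move=> HK Ks; apply: is_lubI => [i|u Ku]; first exact: leM_trans (HK i) (is_lub_ub _ Ks).
by apply: (is_lub_least Ks) => i; apply: Ku.
Qed.

Lemma lub_unique S (a b : M) : is_lub S a -> is_lub S b -> a = b.
Proof.
case: HM => antisym _ _ [ua la] [ub lb].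
by apply: antisym; [apply: la | apply: lb].
Qed.

Lemma lubP K : ascending K -> is_lub (range K) (lub K).
Proof. by move=> HK; apply: epsilon_spec; case: HM => _ ex _; apply: ex. Qed.

Lemma cofinal_lub K L a b :
  is_lub (range K) a -> is_lub (range L) b ->
  (forall k, exists n, leM (K k) (L n)) -> (forall n, exists k, leM (L n) (K k)) ->
  a = b.
Proof.
move=> Ka Lb KL LK; case: HM => antisym _ _; apply: antisym.
  by apply: (is_lub_least Ka) => k; have [n le] := KL k; apply: leM_trans le (is_lub_ub _ Lb).
by apply: (is_lub_least Lb) => n; have [k le] := LK n; apply: leM_trans le (is_lub_ub _ Ka).
Qed.

(* The lub of a sum of ascending chains is the sum of their lubs; this is
   where the axiom  n + lub K = lub (n + K)  of flow monoids enters. *)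
Lemma lub_add K L a b :
  ascending K -> ascending L -> is_lub (range K) a -> is_lub (range L) b ->
  is_lub (range (fun i => K i + L i)) (a + b).
Proof.
move=> HK HL Ka Lb; case: (HM) => _ _ add_lub.
apply: is_lubI => [i|u Hu].
  by apply: leM_add; [apply: is_lub_ub Ka | apply: is_lub_ub Lb].
have aL_le : forall j, leM (a + L j) u.
  move=> j; rewrite addrC; apply: (is_lub_least (add_lub (L j) K a HK Ka)) => i.
  rewrite addrC; apply: leM_trans (Hu (maxn i j)).
  by apply: leM_add; apply: ascending_le; rewrite ?leq_maxl ?leq_maxr.
exact: is_lub_least (add_lub a L b HL Lb) aL_le.
Qed.

Lemma lub_sum (I : eqType) (s : seq I) (K : I -> nat -> M) (a : I -> M) :
  (forall i, i \in s -> ascending (K i)) ->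
  (forall i, i \in s -> is_lub (range (K i)) (a i)) ->
  is_lub (range (fun k => \sum_(i <- s) K i k)) (\sum_(i <- s) a i).
Proof.
elim: s => [|x s IH] HK Ka.
  by apply: is_lubI => [i|u _]; rewrite !big_nil; [exact: leM_refl | exact: leM0].
apply: (@is_lub_ext (fun k => K x k + \sum_(i <- s) K i k)) => [k|].
  by rewrite big_cons.
have sK : forall i, i \in s -> i \in x :: s by move=> i si; rewrite inE si orbT.
rewrite big_cons; apply: lub_add.
- by apply: HK; rewrite inE eqxx.
- by move=> k; apply: leM_sum => i /sK /HK; apply.
- by apply: Ka; rewrite inE eqxx.
by apply: IH => i /sK; [apply: HK | apply: Ka].
Qed.

End Lubs.

Section InfiniteSum.
Variables (M : nmodType) (T : countType) (P : pred T) (c : T -> M).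

Definition isum_term (i : nat) : M :=
  match @pickle_inv T i with
  | Some t => if P t then c t else 0
  | None => 0
  end.

Definition isum_partial (n : nat) : M := \sum_(i < n) isum_term i.

Lemma isum_partial_ascending : ascending isum_partial.
Proof. by move=> n; rewrite /isum_partial big_ord_recr /=; apply: leM_addr. Qed.

Lemma sum_pickle (s : seq T) : all P s ->
  \sum_(t <- s) c t = \sum_(i <- map choice.pickle s) isum_term i.
Proof.
move=> /allP sP; rewrite big_map; apply: eq_big_seq => t /sP Pt.
by rewrite /isum_term pickleK_inv Pt.
Qed.

Lemma isum_partial_le (n : nat) (s : seq T) : uniq s -> all P s ->
  (forall t, P t -> (choice.pickle t < n)%N -> t \in s) ->
  leM (isum_partial n) (\sum_(t <- s) c t).
Proof.
move=> us sP sfull; rewrite /isum_partial -(big_mkord xpredT) /index_iota subn0.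
rewrite (bigID (fun i => oapp P false (pickle_inv i))) /=.
rewrite [X in _ + X]big1 ?addr0 => [|i]; last first.
  by rewrite /isum_term; case: (pickle_inv i) => //= t /negbTE ->.
rewrite -big_filter (sum_pickle sP); apply: leM_sub_sum.
- exact/filter_uniq/iota_uniq.
- by rewrite map_inj_uniq //; apply: (pcan_inj pickleK_inv).
move=> i; rewrite mem_filter mem_iota add0n.
case E: (pickle_inv i) => [t|//] /= /andP [Pt ilt].
have ti : choice.pickle t = i by have := @pickle_invK T i; rewrite E.
by rewrite -ti; apply: map_f; apply: sfull; rewrite ?ti.
Qed.

Lemma le_isum_partial (s : seq T) : uniq s -> all P s ->
  leM (\sum_(t <- s) c t) (isum_partial (\max_(t <- s) choice.pickle t).+1).
Proof.
move=> us sP; rewrite /isum_partial -(big_mkord xpredT) (sum_pickle sP).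
rewrite /index_iota subn0; apply: leM_sub_sum.
- by rewrite map_inj_uniq //; apply: (pcan_inj pickleK_inv).
- exact: iota_uniq.
move=> i /mapP [t st ->]; rewrite mem_iota add0n ltnS.
exact: (@leq_bigmax_seq _ s xpredT choice.pickle t).
Qed.

Lemma isum_exhaustion (HM : flow_monoid M) (V : nat -> seq T) (mu : T -> nat) :
  (forall k, uniq (V k)) -> (forall k, all P (V k)) ->
  (forall k t, P t -> (mu t <= k)%N -> t \in V k) ->
  ascending (fun k => \sum_(t <- V k) c t) ->
  is_lub (range (fun k => \sum_(t <- V k) c t)) (isum P c).
Proof.
move=> Vu VP Vfull Vasc; have Vlub := lubP HM Vasc.
suff -> : isum P c = lub (fun k => \sum_(t <- V k) c t) by [].
apply: (cofinal_lub HM (lubP HM isum_partial_ascending) Vlub) => [n|k].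
  exists (\max_(i <- iota 0 n) oapp mu 0 (pickle_inv i))%N.
  apply: isum_partial_le => // t Pt tn; apply: Vfull => //.
  have := @leq_bigmax_seq _ (iota 0 n) xpredT (fun i => oapp mu 0 (pickle_inv i)) (choice.pickle t).
  by rewrite mem_iota add0n tn pickleK_inv; apply.
by eexists; apply: le_isum_partial.
Qed.

End InfiniteSum.

Section Walks.
Variable X : {fset nat}.

Fixpoint walks (n x y : nat) : seq (seq nat) :=
  match n with
  | 0 => if (x == y) && (y \in X) then [:: [:: y]] else [::]
  | n'.+1 => if y \in X then [seq rcons q y | w <- (X : seq nat), q <- walks n' x w]
             else [::]
  end.

Definition is_walk (n x y : nat) (q : seq nat) : Prop :=
  [/\ size q = n.+1, all (fun v => v \in X) q, head 0 q = x & last 0 q = y].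

Lemma head_rcons_nil (q : seq nat) b : q != [::] -> head 0 (rcons q b) = head 0 q.
Proof. by case: q. Qed.

Lemma walksP n x y q : q \in walks n x y <-> is_walk n x y q.
Proof.
elim: n y q => [|n IH] y q /=.
  split.
    by case: ifP => [/andP [/eqP -> Hy]|//]; rewrite inE => /eqP ->; split; rewrite /= ?Hy.
  case: q => [|a [|b q]] [] //= _; rewrite andbT => Ha <- <-.
  by rewrite eqxx Ha inE.
split.
  case: ifP => // Hy /allpairsPdep [w [q' [_ /IH [Hs Ha Hh Hl] ->]]].
  rewrite /is_walk size_rcons Hs all_rcons Hy Ha last_rcons head_rcons_nil ?Hh //.
  by rewrite -size_eq0 Hs.
case/lastP: q => [[]//|q b]; rewrite /is_walk size_rcons all_rcons last_rcons.
move=> [[Hs] /andP [Hb Ha] Hh <-]; have q0 : q != [::] by rewrite -size_eq0 Hs.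
rewrite Hb; apply/allpairsPdep; exists (last 0 q), q; split => //.
  by case: q q0 Ha {Hh Hs} => [//|a q'] _ /allP; apply; apply: mem_last.
by apply/IH; split; rewrite -?Hh ?head_rcons_nil.
Qed.

Lemma walks_uniq n x y : uniq (walks n x y).
Proof.
elim: n y => [|n IH] y /=; first by case: ifP.
case: ifP => // _; apply: allpairs_uniq_dep => //; first exact: fset_uniq.
move=> [w1 q1] [w2 q2] /allpairsPdep [? [? [_ /walksP [_ _ _ l1] [-> ->]]]]
  /allpairsPdep [? [? [_ /walksP [_ _ _ l2] [-> ->]]]] /= /rcons_inj [q12].
by rewrite -l1 -l2 q12.
Qed.

(* Paths x ... y z with at most k vertices in X, i.e. of size at most k+1. *)
Definition paths_upto (x y z k : nat) : seq (seq nat) :=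
  [seq rcons q z | n <- iota 0 k, q <- walks n x y].

Lemma paths_upto_uniq x y z k : uniq (paths_upto x y z k).
Proof.
apply: allpairs_uniq_dep => //; first exact: iota_uniq.
  by move=> n _; apply: walks_uniq.
move=> [n1 q1] [n2 q2] /allpairsPdep [? [? [_ /walksP [s1 _ _ _] [-> ->]]]]
  /allpairsPdep [? [? [_ /walksP [s2 _ _ _] [-> ->]]]] /= /rcons_inj [q12].
by move: s1; rewrite q12 s2 => -[->].
Qed.

Lemma paths_upto_mono x y z k : {subset paths_upto x y z k <= paths_upto x y z k.+1}.
Proof.
move=> p /allpairsPdep [n [q [nk qw ->]]]; apply/allpairsPdep; exists n, q.
by split => //; move: nk; rewrite !mem_iota !add0n; apply: leq_trans.
Qed.

Lemma paths_upto_path x y z k : z \notin X -> all (is_path_to X x y z) (paths_upto x y z k).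
Proof.
move=> zX; apply/allP => _ /allpairsPdep [n [q [_ /walksP [qs qX qh ql] ->]]].
have q0 : q != [::] by rewrite -size_eq0 qs.
have qn : nth 0 q n = y by rewrite -ql -nth_last qs.
rewrite /is_path_to size_rcons qs /= nth_rcons qs ltnSn qn eqxx last_rcons eqxx zX.
by rewrite head_rcons_nil // qh eqxx -cats1 take_size_cat ?qX.
Qed.

Lemma path_paths_upto x y z k p :
  is_path_to X x y z p -> (size p <= k)%N -> p \in paths_upto x y z k.
Proof.
case/lastP: p => [//|q b].
rewrite /is_path_to size_rcons ltnS /= => /and5P [q1 qX qh qn /andP [/eqP ql _]] qk.
have q0 : q != [::] by case: (q) q1.
move: ql qX qh qn; rewrite last_rcons -cats1 take_size_cat // cats1 => <- qX qh qn.
apply/allpairsPdep; exists (size q).-1, q; split => //.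
  by rewrite mem_iota add0n; case: (size q) q1 qk => // m _; apply: leq_trans.
apply/walksP; split => //.
- by case: (size q) q1.
- by rewrite -(head_rcons_nil b q0); apply/eqP.
move: qn; rewrite nth_rcons; case E: (size q) q1 => // [m] _ /=.
by rewrite ltnSn => /eqP <-; rewrite -nth_last E.
Qed.

End Walks.

Lemma pathfun_rcons (M : Type) (E : nat -> nat -> M -> M) (q : seq nat) b m :
  q != [::] -> pathfun E (rcons q b) m = E (last 0 q) b (pathfun E q m).
Proof. by case: q => [//|a q] _ /=; elim: q a m => [|c q IH] a m //=. Qed.

Section Kleene.
Variables (M : nmodType) (X : {fset nat}) (E : nat -> nat -> M -> M)
  (inf : nat -> nat -> M).
Hypothesis E_distr : forall x y, x \in X -> distributive (E x y).

Definition flow_step (g : nat -> M) : nat -> M :=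
  fun y => inflow X inf y + \sum_(w <- X) E w y (g w).

Definition flow_approx (k : nat) : nat -> M := iter k flow_step (fun _ => 0).

Definition walk_layer (n y : nat) : M :=
  \sum_(x <- X) \sum_(q <- walks X n x y) pathfun E q (inflow X inf x).

Lemma walk_layer0 y : y \in X -> walk_layer 0 y = inflow X inf y.
Proof.
move=> yX; rewrite /walk_layer (bigD1_seq y) ?fset_uniq //= eqxx yX /=.
rewrite big_seq1 big1 ?addr0 // => x /negbTE xy.
by rewrite xy big_nil.
Qed.

Lemma walk_layerS n y : y \in X ->
  walk_layer n.+1 y = \sum_(w <- X) E w y (walk_layer n w).
Proof.
move=> yX; rewrite /walk_layer /= yX.
under eq_bigr do rewrite big_allpairs_dep.
rewrite exchange_big /=; apply: eq_big_seq => w wX.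
rewrite (distributive_sum (E_distr y wX)); apply: eq_bigr => x _.
rewrite (distributive_sum (E_distr y wX)); apply: eq_big_seq => q /walksP [qs _ _ ql].
by rewrite pathfun_rcons ?ql // -size_eq0 qs.
Qed.

Lemma flow_approx_layers k y : y \in X ->
  flow_approx k y = \sum_(n < k) walk_layer n y.
Proof.
elim: k y => [|k IH] y yX; first by rewrite big_ord0.
rewrite /flow_approx iterS -/(flow_approx k) /flow_step big_ord_recl walk_layer0 //.
congr (_ + _); rewrite (eq_big_seq (fun w => \sum_(n < k) E w y (walk_layer n w))).
  by rewrite exchange_big; apply: eq_bigr => n _ /=; rewrite walk_layerS.
by move=> w wX; rewrite IH // (distributive_sum (E_distr y wX)).
Qed.

Lemma flow_approx_ascending y : y \in X -> ascending (flow_approx^~ y).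
Proof. by move=> yX k; rewrite !flow_approx_layers // big_ord_recr; apply: leM_addr. Qed.

Lemma flow_approx_le g : flow_eq X E inf g ->
  forall k y, y \in X -> leM (flow_approx k y) (g y).
Proof.
move=> gsol; elim=> [|k IH] y yX; first exact: leM0.
rewrite gsol //; apply: leM_add; first exact: leM_refl.
by apply: leM_sum => w wX; apply: distributive_mono; [apply: E_distr | apply: IH].
Qed.

Lemma exit_approx_paths k y z : y \in X ->
  E y z (flow_approx k y) =
  \sum_(x <- X) \sum_(p <- paths_upto X x y z k) pathfun E p (inflow X inf x).
Proof.
move=> yX; rewrite flow_approx_layers // (distributive_sum (E_distr z yX)) /paths_upto.
have iota_k : iota 0 k = index_iota 0 k by rewrite /index_iota subn0.
under [RHS]eq_bigr do rewrite big_allpairs_dep iota_k big_mkord.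
rewrite [RHS]exchange_big; apply: eq_bigr => n _ /=.
rewrite (distributive_sum (E_distr z yX)); apply: eq_bigr => x _.
rewrite (distributive_sum (E_distr z yX)); apply: eq_big_seq => q /walksP [qs _ _ ql].
by rewrite pathfun_rcons ?ql // -size_eq0 qs.
Qed.

Hypothesis HM : flow_monoid M.
Hypothesis E_cont : forall x y, x \in X -> continuousM (E x y).

Lemma flow_approx_lubP y : y \in X ->
  is_lub (range (flow_approx^~ y)) (lub (flow_approx^~ y)).
Proof. by move=> yX; apply/lubP/flow_approx_ascending. Qed.

Lemma lub_approx_flow_eq : flow_eq X E inf (fun y => lub (flow_approx^~ y)).
Proof.
move=> y yX; apply: (lub_unique HM (flow_approx_lubP yX)).
apply: lub_unshift; first exact: flow_approx_ascending.
case: (HM) => _ _ add_lub; apply: (add_lub _ (fun k => \sum_(w <- X) E w y (flow_approx k w))).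
  move=> k; apply: leM_sum => w wX.
  by apply: distributive_mono; [apply: E_distr | apply: flow_approx_ascending].
apply: (lub_sum HM) => w wX.
  by move=> k; apply: distributive_mono; [apply: E_distr | apply: flow_approx_ascending].
by apply: E_cont; [|apply: flow_approx_ascending|apply: flow_approx_lubP].
Qed.

Lemma flow_lub_approx y : y \in X -> is_lub (range (flow_approx^~ y)) (flow X E inf y).
Proof.
move=> yX; set phi := fun w => lub (flow_approx^~ w).
have phi_least : is_least_flow X E inf phi.
  split; first exact: lub_approx_flow_eq.
  by move=> g gsol w wX; apply: (is_lub_least (flow_approx_lubP wX)) => k; exact: flow_approx_le.
have [fsol fleast] : is_least_flow X E inf (flow X E inf) by apply: epsilon_spec; exists phi.
case: (HM) => antisym _ _; suff -> : flow X E inf y = phi y by apply: flow_approx_lubP.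
apply: antisym; first exact: fleast (proj1 phi_least) y yX.
exact: (proj2 phi_least) _ fsol y yX.
Qed.

End Kleene.

Theorem theorem3 (M : nmodType) (HM : flow_monoid M)
    (X : {fset nat}) (E : nat -> nat -> M -> M) (in0 : nat -> nat -> M)
    (HE : forall x y, x \in X -> continuousM (E x y) /\ distributive (E x y))
    (inf : nat -> nat -> M) (y z : nat) :
  y \in X -> z \notin X ->
  tf X E inf y z =
  \sum_(x <- X) isum (is_path_to X x y z) (fun p => pathfun E p (inflow X inf x)).
Proof.
move=> yX zX.
have E_distr x w : x \in X -> distributive (E x w) by move=> xX; case: (HE x w xX).
have E_cont x w : x \in X -> continuousM (E x w) by move=> xX; case: (HE x w xX).
set c := fun x p => pathfun E p (inflow X inf x).
set S := fun x k => \sum_(p <- paths_upto X x y z k) c x p.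
have S_asc x : ascending (S x).
  by move=> k; apply: leM_sub_sum; rewrite ?paths_upto_uniq //; apply: paths_upto_mono.
(* tf(y,z) is the lub of E(y,z) applied to the Kleene iterates ... *)
have tf_lub : is_lub (range (fun k => E y z (flow_approx X E inf k y))) (tf X E inf y z).
  by apply: (E_cont _ _ yX); [exact: flow_approx_ascending | exact: flow_lub_approx].
(* ... which are the finite path sums, whose lubs are the infinite sums. *)
apply: (lub_unique HM tf_lub); apply: (@is_lub_ext _ (fun k => \sum_(x <- X) S x k)).
  by move=> k; rewrite exit_approx_paths.
apply: (lub_sum HM) => [x _|x _]; first exact: S_asc.
apply: (@isum_exhaustion _ _ _ _ HM _ size).
- by move=> k; apply: paths_upto_uniq.
- by move=> k; apply: paths_upto_path.
- by move=> k p; apply: path_paths_upto.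
exact: S_asc.
Qed.
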